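(* Let $(X,\tau)$ be a topological space with an operation $\gamma$ on $\tau$. A subset $A$ of $X$ is $\gamma^{*}$-semi-closed if and only if there exists a $\gamma$-closed set $F$ such that $int_\gamma(F)\subseteq A\subseteq F$.
   Context: An operation on $\tau$ is a map $\gamma:\tau\to P(X)$, $V\mapsto V^\gamma$, with $V\subseteq V^\gamma$ for every $V\in\tau$. For $A\subseteq X$, $int_\gamma(A)=\{x\in A: \text{there is an open } N \text{ with } x\in N,\ N^\gamma\subseteq A\}$; $A$ is $\gamma$-open iff $A=int_\gamma(A)$, and $\gamma$-closed iff $X-A$ is $\gamma$-open. $cl_\gamma(A)$ is the set of $x\in X$ such that $U^\gamma\cap A\neq\emptyset$ for every open $U\ni x$. $A$ is $\gamma^{*}$-semi-open if there is a $\gamma$-open set $O$ with $O\subseteq A\subseteq cl_\gamma(O)$; $A$ is $\gamma^{*}$-semi-closed if $X-A$ is $\gamma^{*}$-semi-open. *)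

From HB Require Import structures.
From mathcomp Require Import all_boot all_order.
From mathcomp Require Import all_classical all_reals topology.
Set Implicit Arguments. Unset Strict Implicit. Unset Printing Implicit Defensive.
Local Open Scope classical_set_scope.

(* An operation on tau: a map V |-> V^gamma, only its values on open sets
   matter; we model it as a total map set X -> set X together with the
   hypothesis that V `<=` gamma V for every open V. *)
Definition is_operation (X : topologicalType) (gamma : set X -> set X) : Prop :=
  forall V : set X, open V -> V `<=` gamma V.

Definition int_gamma (X : topologicalType) (gamma : set X -> set X) (A : set X) : set X :=
  [set x | A x /\ exists N : set X, [/\ open N, N x & gamma N `<=` A]].

Definition gamma_open (X : topologicalType) (gamma : set X -> set X) (A : set X) : Prop :=
  A = int_gamma gamma A.

Definition gamma_closed (X : topologicalType) (gamma : set X -> set X) (A : set X) : Prop :=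
  gamma_open gamma (~` A).

Definition cl_gamma (X : topologicalType) (gamma : set X -> set X) (A : set X) : set X :=
  [set x | forall U : set X, open U -> U x -> gamma U `&` A !=set0].

Definition gamma_star_semi_open (X : topologicalType) (gamma : set X -> set X) (A : set X) : Prop :=
  exists O : set X, [/\ gamma_open gamma O, O `<=` A & A `<=` cl_gamma gamma O].

Definition gamma_star_semi_closed (X : topologicalType) (gamma : set X -> set X) (A : set X) : Prop :=
  gamma_star_semi_open gamma (~` A).

From mathcomp Require Import all_boot all_order.
From mathcomp Require Import all_classical all_reals topology.
Local Open Scope classical_set_scope.

(* The key duality is [~` cl_gamma O = int_gamma (~` O)]; with it the condition
   [O <= ~` A <= cl_gamma O] on a gamma-open [O] is exactly the condition
   [int_gamma F <= A <= F] on the gamma-closed set [F = ~` O]. *)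

Lemma setC_cl_gamma (X : topologicalType) (gamma : set X -> set X)
    (hgamma : is_operation gamma) (O : set X) :
  ~` cl_gamma gamma O = int_gamma gamma (~` O).
Proof.
apply/seteqP; split=> x.
- move=> /existsNP[U /not_implyP[oU /not_implyP[Ux /set0P/negP/negPn/eqP gUO]]].
  have gU_sub : gamma U `<=` ~` O.
    move=> y gy Oy; have : (gamma U `&` O) y by split.
    by rewrite gUO.
  by split; [exact: gU_sub (hgamma U oU x Ux) | exists U].
- move=> [_ [U [oU Ux gU_sub]]] clx.
  by have [y [gy Oy]] := clx U oU Ux; exact: gU_sub y gy Oy.
Qed.

Theorem proposition3p29 (X : topologicalType) (gamma : set X -> set X)
  (hgamma : is_operation gamma) (A : set X) :
  gamma_star_semi_closed gamma A <->
  exists F : set X, [/\ gamma_closed gamma F, int_gamma gamma F `<=` A & A `<=` F].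
Proof.
split.
- move=> [O [gO OA AO]]; exists (~` O); split.
  + by rewrite /gamma_closed setCK.
  + by rewrite -setC_cl_gamma // -[A]setCK; exact: subsetC.
  + by rewrite -[A]setCK; exact: subsetC.
- move=> [F [gF FA AF]]; exists (~` F); split=> //.
  + exact: subsetC.
  + rewrite -[cl_gamma _ _]setCK setC_cl_gamma // setCK.
    exact: subsetC.
Qed.
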